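(* Let $A=kQ/I$ with reduced Gröbner–Shirshov basis $\mathcal G$, $W=\mathrm{Tip}(\mathcal G)$, Anick chains $W^{(i)}$, and two-sided Anick resolution $(P_*,d^{\mathcal M})$, all as described in the context. Suppose that for every $n\ge1$ and every $(n-1)$-chain $(w_1,\dots,w_n)\in W^{(n-1)}$, the path $w=w_1\cdots w_n$ does not converge to $u=u_1\cdots u_{n-1}$ for any $(u_1,\dots,u_{n-1})\in W^{(n-2)}$. Then the two-sided Anick resolution $(P_*,d^{\mathcal M})$ is minimal.
   Context: Quiver and order: - $k$ is a field and $Q$ a finite quiver. Paths are written left to right; vertices are paths of length $0$. - $\mathcal B$ is the set of all paths, $\mathcal B_+$ the set of paths of positive length, $Q_0$ the vertices and $Q_1$ the arrows. - Fix an admissible well-order $\prec$ on $\mathcal B$ (a well-order compatible with multiplication). $\mathrm{Tip}(r)$ is the $\prec$-largest path with nonzero coefficient in $r\ne0$. Ideal and Gröbner–Shirshov basis: - $I\subseteq kQ$ is a two-sided ideal contained in the span of paths of length $\ge2$, and $A=kQ/I$. - $\mathrm{Tip}(I)=\{\mathrm{Tip}(r):0\ne r\in I\}$ and $\mathrm{NonTip}(I)=\mathcal B\setminus\mathrm{Tip}(I)$, which is a basis of $A$. - $\mathcal G$ is the reduced Gröbner–Shirshov basis of $I$: $\mathcal G\subseteq I$; $W=\mathrm{Tip}(\mathcal G)$ generates $\langle\mathrm{Tip}(I)\rangle$; each element has tip coefficient $1$ and non-tip part in $\mathrm{span}\,\mathrm{NonTip}(I)$; no element of $W$ is a factor of another.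 Ufnarovskiĭ graph and chains: - The Ufnarovskiĭ graph $Q_W$ has vertices $Q_0\cup Q_1\cup\{$proper right factors of elements of $W\}$. - Its arrows are $e\to x$ ($e\in Q_0$, $x\in Q_1$, $x=ex$), together with $u\to v$ whenever $uv\in\mathcal B\cap\langle\mathrm{Tip}(I)\rangle$ and no proper left factor of $uv$ lies in $\langle\mathrm{Tip}(I)\rangle$. - An $i$-chain ($i\ge0$) is $(v_1,\dots,v_{i+1})\in\mathcal B_+^{i+1}$ such that $e\to v_1\to\cdots\to v_{i+1}$ is a path in $Q_W$ for some $e\in Q_0$. $W^{(i)}$ is the set of $i$-chains and $W^{(-1)}=Q_0$. Reduction and convergence: - For $w,w'\in\mathcal B$, $w$ reduces in one step to $w'$ if there are $u,v\in\mathcal B$ and $f\in I$ with $\mathrm{Tip}(f)\in W$, $w=u\,\mathrm{Tip}(f)\,v$, and $w'=upv$ for some path $p\ne\mathrm{Tip}(f)$ appearing with nonzero coefficient in $f$. - $w$ converges to $w'$ if there is a finite sequence of one or more reduction steps $w\Rightarrow u_1\Rightarrow\cdots\Rightarrow u_m\Rightarrow w'$ with $u_1,\dots,u_m\in\mathcal B$. Bar resolution and the quiver $\overline{Q_B}$: - $E=\bigoplus_{e\in Q_0}ke$, $A_+=\mathrm{span}(\mathrm{NonTip}(I)\setminus Q_0)$, $A^e=A\otimes_kA^{op}$. - The reduced bar resolution $B(A,A)_n=A\otimes_EA_+^{\otimes_En}\otimes_EA$ has differential $$d[a_1|\cdots|a_n]=a_1[a_2|\cdots|a_n]+\sum_{i=1}^{n-1}(-1)^i[\cdots|a_ia_{i+1}|\cdots]+(-1)^n[a_1|\cdots|a_{n-1}]a_n.$$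 It decomposes as $\bigoplus A^e\cdot[w_1|\cdots|w_n]$ over sequences of elements $w_i\in\mathrm{NonTip}(I)\setminus Q_0$ with $w_1\cdots w_n$ a path. - The weighted quiver $\overline{Q_B}$ has these sequences as vertices, with degree-$0$ vertices $Q_0$. - From $(w_1,\dots,w_n)$ there is an arrow $d_n^0$ to $(w_2,\dots,w_n)$ of weight $w_1\otimes1$. - For $1\le i\le n-1$ and each term $\lambda_ju_j$ of the normal form $w_iw_{i+1}\equiv\sum_j\lambda_ju_j \bmod I$ (distinct $u_j\in\mathrm{NonTip}(I)\setminus Q_0$, $\lambda_j\ne0$), there is an arrow $d_n^i$ to $(w_1,\dots,w_{i-1},u_j,w_{i+2},\dots,w_n)$ of weight $(-1)^i\lambda_j\otimes1$. - There is an arrow $d_n^n$ to $(w_1,\dots,w_{n-1})$ of weight $(-1)^n1\otimes w_n$. - Here $a\otimes b$ denotes the $A^e$-map sending the source generator to $a\cdot(\text{target generator})\cdot b$. The matching $\mathcal M$ and $\overline{Q_B}^{\mathcal M}$: - For $w\in\mathcal B$, $V_{w,i}$ is the set of vertices $(w_1,\dots,w_n)$ with $w_1\cdots w_n=w$ and $i\ge -1$ maximal such that $(w_1,\dots,w_{i+1})$ is an $i$-chain. - $\mathcal M$ is the set of arrows $(w_1,\dots,w_{i+1},w'_{i+2},w''_{i+2},w_{i+3},\dots,w_n)\to(w_1,\dots,w_n)$ with $(w_1,\dots,w_n)\in V_{w,i}$, $w'_{i+2}w''_{i+2}=w_{i+2}$ (both of positive length), and source in $V_{w,i+1}$. - $\overline{Q_B}^{\mathcal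 M}$ is obtained by replacing each arrow of $\mathcal M$ of weight $\phi$ by a reversed dotted arrow of weight $-\phi^{-1}$; the other arrows are called thick. A zigzag path alternates dotted and thick arrows. The two-sided Anick resolution: - $P_n=A\otimes_EkW^{(n-1)}\otimes_EA\cong\bigoplus_{(w_1,\dots,w_n)\in W^{(n-1)}}A^e\cdot[w_1|\cdots|w_n]$. - The component of $d^{\mathcal M}_n$ from the summand of an $(n-1)$-chain to that of an $(n-2)$-chain is the sum, over all zigzag paths in $\overline{Q_B}^{\mathcal M}$ between them, of the composites of the arrow weights. - It is a resolution of $A$ by projective $A$-bimodules, augmented by multiplication $P_0=A\otimes_EA\to A$. Minimality: a projective bimodule resolution $(P_*,d_* )$ of an $A$-bimodule is minimal if the induced maps $1\otimes d_*\otimes1:E\otimes_AP_*\otimes_AE\to E\otimes_AP_{*-1}\otimes_AE$ are all zero. *)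

From HB Require Import structures.
From mathcomp Require Import all_boot all_order all_algebra.
From Stdlib Require Import ClassicalEpsilon Relation_Operators.
Set Implicit Arguments. Unset Strict Implicit. Unset Printing Implicit Defensive.
Import Order.TTheory GRing.Theory Num.Theory.

Record quiver := Quiver {
  qv : finType; qa : finType; qsrc : qa -> qv; qtgt : qa -> qv }.

Section Anick.
Variable Q : quiver.

(* A (candidate) path: start vertex and list of arrows, read left to right.
   Vertices are the paths (e, [::]). *)
Definition qpath := (qv Q * seq (qa Q))%type.

Definition valid (p : qpath) : bool :=
  match p.2 with
  | [::] => true
  | a :: s => (qsrc a == p.1) && path (fun a b => qtgt a == qsrc b) a s
  end.

Definition pend (p : qpath) : qv Q := last p.1 (map (@qtgt Q) p.2).
Definition plen (p : qpath) : nat := size p.2.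
Definition pcat (p q : qpath) : qpath := (p.1, p.2 ++ q.2).
Definition vtx (e : qv Q) : qpath := (e, [::]).

Definition factor (p w : qpath) : Prop :=
  exists u v, valid u /\ valid v /\ pend u = p.1 /\ pend p = v.1 /\
    w = pcat (pcat u p) v.
Definition proper_left_factor (p w : qpath) : Prop :=
  valid p /\ exists q, valid q /\ 0 < plen q /\ pend p = q.1 /\ w = pcat p q.
Definition proper_right_factor (p w : qpath) : Prop :=
  valid p /\ exists q, valid q /\ 0 < plen q /\ pend q = p.1 /\ w = pcat q p.

Variable k : fieldType.

(* Elements of kQ: coefficient functions with finite support on valid paths. *)
Definition kq := qpath -> k.
Definition is_kq (f : kq) : Prop :=
  (exists s : seq qpath, forall p, f p != 0%R -> p \in s) /\
  (forall p, f p != 0%R -> valid p).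
Definition kzero : kq := fun _ => 0%R.
Definition kadd (f g : kq) : kq := fun p => (f p + g p)%R.
Definition kscale (c : k) (f : kq) : kq := fun p => (c * f p)%R.
Definition ksub (f g : kq) : kq := fun p => (f p - g p)%R.
Definition pel (p : qpath) : kq := fun q => if q == p then 1%R else 0%R.
Definition kone : kq := fun q => if q.2 is [::] then 1%R else 0%R.
Definition kmul (f g : kq) : kq := fun w =>
  if valid w then
    (\sum_(i < (plen w).+1)
       f (w.1, take i w.2) * g (pend (w.1, take i w.2), drop i w.2))%R
  else 0%R.

Definition admissible (ord : rel qpath) : Prop :=
  (forall p, valid p -> ~~ ord p p) /\
  (forall p q r, valid p -> valid q -> valid r -> ord p q -> ord q r -> ord p r) /\
  (forall p q, valid p -> valid q -> p <> q -> ord p q \/ ord q p) /\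
  (forall P : qpath -> Prop, (exists p, valid p /\ P p) ->
     exists m, valid m /\ P m /\ forall q, valid q -> P q -> ~~ ord q m) /\
  (forall p q u v, valid p -> valid q -> valid u -> valid v -> ord p q ->
     pend u = p.1 -> pend u = q.1 -> pend p = v.1 -> pend q = v.1 ->
     ord (pcat (pcat u p) v) (pcat (pcat u q) v)).

Definition is_ideal (I : kq -> Prop) : Prop :=
  (forall f g, (forall p, f p = g p) -> I f -> I g) /\
  (forall f, I f -> is_kq f) /\
  I kzero /\
  (forall f g, I f -> I g -> I (kadd f g)) /\
  (forall c f, I f -> I (kscale c f)) /\
  (forall f g, is_kq g -> I f -> I (kmul g f) /\ I (kmul f g)) /\
  (forall f p, I f -> f p != 0%R -> 2 <= plen p).

Variable ord : rel qpath.
Variable I : kq -> Prop.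
Variable G : kq -> Prop.

Definition is_tip (f : kq) (p : qpath) : Prop :=
  f p != 0%R /\ forall q, f q != 0%R -> q = p \/ ord q p.
Definition inTipI (p : qpath) : Prop := exists f, I f /\ is_tip f p.
Definition nontip (p : qpath) : Prop := valid p /\ ~ inTipI p.
Definition inTipIdeal (w : qpath) : Prop :=
  valid w /\ exists t, inTipI t /\ factor t w.

Definition inW (p : qpath) : Prop := exists g, G g /\ is_tip g p.

Definition reduced_GS : Prop :=
  (forall g, G g -> I g /\ exists t, is_tip g t /\ g t = 1%R /\
       forall q, q <> t -> g q != 0%R -> nontip q) /\
  (forall w, inTipI w -> exists t, inW t /\ factor t w) /\
  (forall p q, inW p -> inW q -> factor p q -> p = q).

Definition uf_vertex (p : qpath) : Prop :=
  valid p /\ (plen p <= 1 \/ exists w, inW w /\ proper_right_factor p w).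
Definition uf_arrow (u v : qpath) : Prop :=
  uf_vertex u /\ uf_vertex v /\
  ((plen u = 0 /\ plen v = 1 /\ v.1 = u.1) \/
   (pend u = v.1 /\ inTipIdeal (pcat u v) /\
    forall p, proper_left_factor p (pcat u v) -> ~ inTipIdeal p)).
Fixpoint uf_walk (x : qpath) (s : seq qpath) : Prop :=
  match s with
  | [::] => True
  | v :: s' => uf_arrow x v /\ uf_walk v s'
  end.
(* (v_1,...,v_m) is an (m-1)-chain *)
Definition is_chainseq (s : seq qpath) : Prop :=
  s <> [::] /\ (forall v, v \in s -> valid v /\ 0 < plen v) /\
  exists e, uf_walk (vtx e) s.

(* Vertices of the quiver Q_B: (e, [w_1;...;w_n]); for n = 0 it is the
   vertex e of Q_0, for n >= 1 the label e is the start of w_1. *)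
Definition qbv := (qv Q * seq qpath)%type.
Definition composable (s : seq qpath) : bool :=
  if s is w :: s' then path (fun a b => pend a == b.1) w s' else true.
Definition qb_vertex (x : qbv) : Prop :=
  (forall w, w \in x.2 -> nontip w /\ 0 < plen w) /\ composable x.2 /\
  (if x.2 is w :: _ then x.1 = w.1 else True).
Definition qb_prod (x : qbv) : qpath := foldl pcat (vtx x.1) x.2.
(* W^(n-1) for n = size x.2 (W^(-1) = Q_0) *)
Definition chain_v (x : qbv) : Prop :=
  if x.2 is w :: _ then is_chainseq x.2 /\ x.1 = w.1 else True.

Definition reduces (w w' : qpath) : Prop :=
  exists u v f t p, valid u /\ valid v /\ I f /\ is_tip f t /\ inW t /\
    pend u = t.1 /\ pend t = v.1 /\ w = pcat (pcat u t) v /\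
    p <> t /\ f p != 0%R /\ valid p /\ pend u = p.1 /\ pend p = v.1 /\
    w' = pcat (pcat u p) v.
Definition converges (w w' : qpath) : Prop := clos_trans _ reduces w w'.

(* The algebra A = kQ/I: elements are supported on NonTip(I); normal forms *)
Definition inA (g : kq) : Prop := is_kq g /\ forall p, g p != 0%R -> nontip p.
Definition NF (f : kq) : kq :=
  epsilon (inhabits kzero) (fun g => inA g /\ I (ksub f g)).
Definition amul (a b : kq) : kq := NF (kmul a b).
Definition oneA : kq := kone.

(* Label (i, u): d_n^i; for 1 <= i <= n-1, u is the term
   of the normal form of w_i w_{i+1}; for i = 0 (resp. n), u = w_1 (resp. w_n).
   Weights are pure tensors (a, b) meaning the A^e-map gen |-> a * gen * b. *)
Definition lab := (nat * qpath)%type.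
Definition nthw (x : qbv) (j : nat) : qpath := nth (vtx x.1) x.2 j.

Definition qb_arrow (x : qbv) (l : lab) (y : qbv) : Prop :=
  let n := size x.2 in let i := l.1 in let u := l.2 in
  qb_vertex x /\ 1 <= n /\
  (if i == 0%N then u = nthw x 0 /\ y = (pend (nthw x 0), behead x.2)
   else if i == n then u = nthw x n.-1 /\ y = ((nthw x 0).1, take n.-1 x.2)
   else (i < n)%N /\ NF (kmul (pel (nthw x i.-1)) (pel (nthw x i))) u != 0%R /\
        y = (x.1, take i.-1 x.2 ++ u :: drop i.+1 x.2)).

Definition mid_coef (x : qbv) (l : lab) : k :=
  ((-1) ^+ l.1 * NF (kmul (pel (nthw x l.1.-1)) (pel (nthw x l.1))) l.2)%R.

Definition qb_weight (x : qbv) (l : lab) : kq * kq :=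
  let n := size x.2 in let i := l.1 in
  if i == 0%N then (pel (nthw x 0), oneA)
  else if i == n then (kscale ((-1) ^+ n)%R oneA, pel (nthw x n.-1))
  else (kscale (mid_coef x l) oneA, oneA).

Definition prefix_chain (s : seq qpath) (j : nat) : Prop :=
  j = 0%N \/ is_chainseq (take j s).
(* x in V_{w, j-1}: j is the maximal length of a chain prefix *)
Definition maxchain (s : seq qpath) (j : nat) : Prop :=
  (j <= size s)%N /\ prefix_chain s j /\
  forall j', (j < j')%N -> (j' <= size s)%N -> ~ prefix_chain s j'.

Definition matched (x : qbv) (l : lab) (y : qbv) : Prop :=
  qb_arrow x l y /\ (1 <= l.1)%N /\ (l.1 < size x.2)%N /\
  l.2 = pcat (nthw x l.1.-1) (nthw x l.1) /\
  maxchain y.2 l.1.-1 /\ maxchain x.2 l.1.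

Definition thick (x : qbv) (l : lab) (y : qbv) : Prop :=
  qb_arrow x l y /\ ~ matched x l y.

(* weight -phi^{-1} of the dotted arrow reversing the matched arrow x -l-> y *)
Definition dot_weight (x : qbv) (l : lab) : kq * kq :=
  (kscale (- (mid_coef x l)^-1)%R oneA, oneA).

(* composite in A^e = A (x) A^op: first (a1,b1), then (a2,b2) *)
Definition wcomp (w1 w2 : kq * kq) : kq * kq :=
  (amul w1.1 w2.1, amul w2.2 w1.2).

(* zigzag paths: alternately thick (down) and dotted (up), starting and
   ending with a thick arrow *)
Fixpoint zz_ok (x : qbv) (z : seq (lab * qbv)) (th : bool) : Prop :=
  match z with
  | [::] => True
  | (l, y) :: z' =>
      (if th then thick x l y else matched y l x) /\ zz_ok y z' (~~ th)
  end.
Fixpoint zz_wt (x : qbv) (z : seq (lab * qbv)) (th : bool) (acc : kq * kq)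
    : kq * kq :=
  match z with
  | [::] => acc
  | (l, y) :: z' =>
      zz_wt y z' (~~ th) (wcomp acc (if th then qb_weight x l else dot_weight y l))
  end.
Definition zigzag (c c' : qbv) (z : seq (lab * qbv)) : Prop :=
  zz_ok c z true /\ odd (size z) /\ last c (unzip2 z) = c'.

(* Minimality of (P_*, d^M): each component of 1 (x) d^M (x) 1 from the
   summand of an (n-1)-chain c to that of an (n-2)-chain c' is zero.
   The component of d^M is sum_z a_z (x) b_z over zigzag paths z; after
   applying E (x)_A - (x)_A E it becomes (sum_z a_z(s) b_z(t)) c', where
   s, t are the start and end vertices of c'. *)
Definition anick_minimal : Prop :=
  forall (n : nat) (c c' : qbv), (1 <= n)%N ->
    chain_v c -> size c.2 = n -> chain_v c' -> size c'.2 = n.-1 ->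
    forall zs : seq (seq (lab * qbv)), uniq zs ->
      (forall z, z \in zs <-> zigzag c c' z) ->
      (\sum_(z <- zs)
        (zz_wt c z true (oneA, oneA)).1 (vtx c'.1) *
        (zz_wt c z true (oneA, oneA)).2 (vtx (pend (qb_prod c'))) = 0)%R.

End Anick.

(* Every weight along a zigzag path from an (n-1)-chain c to an (n-2)-chain c'
   is a pure tensor a (x) b, and 1 (x) - (x) 1 evaluates it at the two end
   vertices of c'.  A thick arrow d^0 (resp. d^n) contributes a path of positive
   length on the left (resp. right), which vanishes at every vertex; this
   survives multiplication in A because normal forms do not change vertex
   coefficients (I lies in the span of paths of length >= 2).  A thick arrow d^i,
   0 < i < n, replaces w_i w_(i+1) by a path u in the support of its normal form,
   and every such u is w_i w_(i+1) itself or a path it converges to; a dotted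
   arrow leaves the product w_1 ... w_n unchanged.  So a zigzag path with a
   surviving weight forces the product of c to equal or converge to the product
   of c'.  Convergence is excluded by hypothesis, and equality is impossible
   because the Ufnarovskii graph is deterministic: a path is the product of at
   most one chain. *)
From HB Require Import structures.
From mathcomp Require Import all_boot all_order all_algebra.
From mathcomp Require Import zify ring.
From Stdlib Require Import ClassicalEpsilon Relation_Operators Classical.
From Stdlib Require Import FunctionalExtensionality.
Set Implicit Arguments. Unset Strict Implicit. Unset Printing Implicit Defensive.
Import GRing.Theory.

Section PathAlgebra.
Variable Q : quiver.
Implicit Types (a b p q : qpath Q).

Lemma valid_cat (e : qv Q) l1 l2 :
  valid (e, l1 ++ l2) = valid (e, l1) && valid (pend (e, l1), l2).
Proof.
case: l1 => [|a l1] /=; first by rewrite /pend.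
rewrite /valid /= cat_path /pend /= last_map -andbA; congr (_ && (_ && _)).
by case: l2 => [|b l2] //=; rewrite eq_sym.
Qed.

Lemma pend_cat (e : qv Q) l1 l2 : pend (e, l1 ++ l2) = pend (pend (e, l1), l2).
Proof. by rewrite /pend /= map_cat last_cat. Qed.

Lemma valid_cat_pend (e e' : qv Q) l1 l2 :
  valid (e, l1 ++ l2) -> valid (e', l2) -> l2 <> [::] -> pend (e, l1) = e'.
Proof.
rewrite valid_cat => /andP [_]; case: l2 => [//|c l2] /=.
by rewrite /valid /= => /andP [/eqP <- _] /andP [/eqP <- _].
Qed.

Lemma valid_plen_eq p q : valid p -> valid q -> 0 < plen p -> p.2 = q.2 -> p = q.
Proof.
case: p q => [e [|a l]] [e' l'] //; rewrite /valid /= => + + _ le'; rewrite -le'.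
by move=> /andP [/eqP <- _] /andP [/eqP <- _].
Qed.

Lemma valid_pcat a b : valid a -> valid b -> pend a = b.1 -> valid (pcat a b).
Proof. by case: a => e l1; case: b => e2 l2 va vb /= he; rewrite valid_cat va he. Qed.

Lemma valid_pcatl a b : valid (pcat a b) -> valid a.
Proof. by case: a => e l1; rewrite /pcat /= valid_cat => /andP[]. Qed.

Lemma valid_pcatr a b : valid (pcat a b) -> valid (pend a, b.2).
Proof. by case: a => e l1; rewrite /pcat /= valid_cat => /andP[]. Qed.

Lemma pend_pcat a b : pend a = b.1 -> pend (pcat a b) = pend b.
Proof. by case: a => e l1; case: b => e2 l2 /= he; rewrite /pcat /= pend_cat he. Qed.

Lemma plen_pcat a b : plen (pcat a b) = plen a + plen b.
Proof. by rewrite /plen /pcat /= size_cat. Qed.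

Lemma qb_prodE (x : qbv Q) : qb_prod x = (x.1, flatten (map snd x.2)).
Proof.
rewrite /qb_prod -[x.1 in RHS]/(vtx x.1).1 -[in RHS](cat0s (flatten _)).
rewrite -[[::]]/(vtx x.1).2; elim: x.2 (vtx x.1) => [|w s IH] [e l] /=.
  by rewrite cats0.
by rewrite IH /pcat /= catA.
Qed.

Lemma factor_plen p w : factor p w -> plen p <= plen w.
Proof. by case=> [u [v [_ [_ [_ [_ ->]]]]]]; rewrite !plen_pcat; lia. Qed.

Lemma factor_trans p q r : factor p q -> factor q r -> factor p r.
Proof.
move=> [u [v [vu [vv [hu [hv ->]]]]]] [u' [v' [vu' [vv' [hu' [hv' ->]]]]]].
exists (pcat u' u), (pcat v v'); split; first by apply: valid_pcat; rewrite ?hu'.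
split; first by apply: valid_pcat; rewrite // -hv' !pend_pcat.
split; first by rewrite pend_pcat.
by split; last by rewrite /pcat /= !catA.
Qed.

Variable k : fieldType.
Implicit Types (f g h : kq Q k).
Local Open Scope ring_scope.

Lemma kmul_neq0 f g w : kmul f g w != 0 ->
  valid w /\ exists i, [/\ (i <= size w.2)%N, f (w.1, take i w.2) != 0 &
                          g (pend (w.1, take i w.2), drop i w.2) != 0].
Proof.
rewrite /kmul; case: ifP => [vw|]; last by rewrite eqxx.
move=> H; split=> //; apply: NNPP => hn; move: H; rewrite big1 ?eqxx // => i _.
apply/eqP; rewrite mulf_eq0; apply: contraT; rewrite negb_or => /andP [h1 h2].
by case: hn; exists i; rewrite -ltnS ltn_ord.
Qed.

Lemma kmul_vtx f g (e : qv Q) : kmul f g (vtx e) = f (vtx e) * g (vtx e).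
Proof. by rewrite /kmul /= big_ord1. Qed.

Lemma pel_neq0 p q : pel k p q != 0 -> q = p.
Proof. by rewrite /pel; case: (q =P p) => // _; rewrite eqxx. Qed.

Lemma pel_id p : pel k p p = 1.
Proof. by rewrite /pel eqxx. Qed.

Lemma kmul_pelr f x b : valid (pcat x b) -> pend x = b.1 ->
  kmul f (pel k b) (pcat x b) = f x.
Proof.
move=> v he; rewrite /kmul v /= /plen /= size_cat.
have H : (size x.2 < (size x.2 + size b.2).+1)%N by rewrite ltnS leq_addr.
rewrite (bigD1 (Ordinal H)) //= big1 ?addr0.
  rewrite take_size_cat // drop_size_cat // -!surjective_pairing he.
  by rewrite -surjective_pairing pel_id mulr1.
move=> i /eqP hi; apply/eqP; rewrite mulf_eq0; apply/orP; right.
apply/eqP; rewrite /pel; case: eqP => // /(congr1 (fun z => size z.2)) /=.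
rewrite size_drop size_cat => hs; case: hi; apply: val_inj => /=.
by have := ltn_ord i; rewrite ltnS; lia.
Qed.

Lemma kmul_pell a g y : valid (pcat a y) -> pend a = y.1 ->
  kmul (pel k a) g (pcat a y) = g y.
Proof.
move=> v he; rewrite /kmul v /= /plen /= size_cat.
have H : (size a.2 < (size a.2 + size y.2).+1)%N by rewrite ltnS leq_addr.
rewrite (bigD1 (Ordinal H)) //= big1 ?addr0.
  rewrite take_size_cat // drop_size_cat //.
  by case: a {v H} he => ? ? /= ->; rewrite pel_id mul1r; case: y.
move=> i /eqP hi; apply/eqP; rewrite mulf_eq0; apply/orP; left.
apply/eqP; rewrite /pel; case: eqP => // /(congr1 (fun z => size z.2)) /=.
rewrite size_take size_cat => hs; case: hi; apply: val_inj => /=.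
by have := ltn_ord i; rewrite ltnS; move: hs; case: ltnP; lia.
Qed.

Lemma kmul_pel a b : valid a -> valid b -> pend a = b.1 ->
  kmul (pel k a) (pel k b) = pel k (pcat a b).
Proof.
move=> va vb he; apply: functional_extensionality => w.
have [->|ne] := eqVneq w (pcat a b); first by rewrite kmul_pell ?pel_id ?valid_pcat.
have -> : pel k (pcat a b) w = 0 by rewrite /pel (negbTE ne).
apply/eqP; apply: contraT => /kmul_neq0.
case=> vw [i [_ /pel_neq0 h1 /pel_neq0 h2]]; case/eqP: ne.
by case: w vw h1 h2 => e l /= _ h1 h2; rewrite /pcat -h1 -h2 /= cat_take_drop.
Qed.

Lemma is_kq_kmul f g : is_kq f -> is_kq g -> is_kq (kmul f g).
Proof.
move=> [[s1 h1] _] [[s2 h2] _]; split; last by move=> p /kmul_neq0[].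
exists [seq pcat x y | x <- s1, y <- s2] => w /kmul_neq0 [_ [i [_ hf hg]]].
have -> : w = pcat (w.1, take i w.2) (pend (w.1, take i w.2), drop i w.2).
  by rewrite /pcat /= cat_take_drop; case: w {hf hg}.
by apply: allpairs_f; [apply: h1 | apply: h2].
Qed.

Lemma is_kq_pel p : valid p -> is_kq (pel k p).
Proof.
by move=> vp; split; [exists [:: p] => q /pel_neq0 ->; rewrite inE | move=> q /pel_neq0 ->].
Qed.

Lemma is_kq_oneA : is_kq (oneA k : kq Q k).
Proof.
rewrite /oneA /kone; split; last by move=> [e [|a l]] //=; rewrite eqxx.
exists [seq vtx e | e <- enum (qv Q)] => -[e [|a l]] /=; last by rewrite eqxx.
by move=> _; apply: map_f; rewrite mem_enum.
Qed.

Lemma is_kq_scale c f : is_kq f -> is_kq (kscale c f).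
Proof.
move=> [[s h1] h2]; split; [exists s => p|move=> p].
  by rewrite /kscale mulf_eq0 negb_or => /andP[_ /h1].
by rewrite /kscale mulf_eq0 negb_or => /andP[_ /h2].
Qed.

Lemma is_kq_sub f g : is_kq f -> is_kq g -> is_kq (ksub f g).
Proof.
have ksub_neq0 p : ksub f g p != 0 -> f p != 0 \/ g p != 0.
  by rewrite /ksub; have [->|] := eqVneq (f p) 0; [rewrite sub0r oppr_eq0; right|left].
move=> [[s1 h1] v1] [[s2 h2] v2]; split; last by move=> p /ksub_neq0 [/v1|/v2].
by exists (s1 ++ s2) => p /ksub_neq0 [/h1|/h2]; rewrite mem_cat => ->; rewrite ?orbT.
Qed.

End PathAlgebra.

Section NormalForms.
Variable Q : quiver.
Variable k : fieldType.
Variable ord : rel (qpath Q).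
Variables I G : kq Q k -> Prop.
Hypothesis Hadm : admissible ord.
Hypothesis HI : is_ideal I.
Hypothesis HGS : reduced_GS ord I G.
Local Open Scope ring_scope.
Implicit Types (f g h : kq Q k) (p q : qpath Q).

Lemma I_ext f g : (forall p, f p = g p) -> I f -> I g.
Proof. by case: HI => H _; apply: H. Qed.
Lemma I_is_kq f : I f -> is_kq f.
Proof. by case: HI => _ [H _]; apply: H. Qed.
Lemma I_zero : I (@kzero Q k).
Proof. by case: HI => _ [_ []]. Qed.
Lemma I_add f g : I f -> I g -> I (kadd f g).
Proof. by case: HI => _ [_ [_ [H _]]]; apply: H. Qed.
Lemma I_scale c f : I f -> I (kscale c f).
Proof. by case: HI => _ [_ [_ [_ [H _]]]]; apply: H. Qed.
Lemma I_plen f p : I f -> f p != 0 -> (2 <= plen p)%N.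
Proof. by case: HI => _ [_ [_ [_ [_ [_ H]]]]]; apply: H. Qed.

Lemma I_sub f g : I f -> I g -> I (ksub f g).
Proof.
move=> If Ig; apply: (@I_ext (kadd f (kscale (-1) g))); last exact: I_add (I_scale _ Ig).
by move=> p; rewrite /kadd /kscale /ksub mulN1r.
Qed.

Lemma I_ksubxx f : I (ksub f f).
Proof. by apply: (I_ext _ I_zero) => p; rewrite /ksub subrr. Qed.

Lemma I_ksubD f f' g : I (ksub f f') -> I (ksub f' g) -> I (ksub f g).
Proof.
move=> I1 I2; apply: (I_ext _ (I_add I1 I2)) => p.
by rewrite /kadd /ksub addrA subrK.
Qed.

Lemma I_sandwich a b g : valid a -> valid b -> I g ->
  I (kmul (kmul (pel k a) g) (pel k b)).
Proof.
case: HI => _ [_ [_ [_ [_ [H _]]]]] va vb Ig.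
exact: (H _ _ (is_kq_pel k vb) (H _ _ (is_kq_pel k va) Ig).1).2.
Qed.

Lemma ord_irr p : valid p -> ~~ ord p p.
Proof. by case: Hadm => H _; apply: H. Qed.
Lemma ord_trans p q r : valid p -> valid q -> valid r -> ord p q -> ord q r -> ord p r.
Proof. by case: Hadm => _ [H _]; apply: H. Qed.
Lemma ord_total p q : valid p -> valid q -> p <> q -> ord p q \/ ord q p.
Proof. by case: Hadm => _ [_ [H _]]; apply: H. Qed.
Lemma ord_pcat p q u v : valid p -> valid q -> valid u -> valid v -> ord p q ->
  pend u = p.1 -> pend u = q.1 -> pend p = v.1 -> pend q = v.1 ->
  ord (pcat (pcat u p) v) (pcat (pcat u q) v).
Proof. by case: Hadm => _ [_ [_ [_ H]]]; apply: H. Qed.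

Lemma ord_wf_ind (P : qpath Q -> Prop) :
  (forall m, valid m -> (forall q, valid q -> ord q m -> P q) -> P m) ->
  forall m, valid m -> P m.
Proof.
move=> H m vm; apply: NNPP => nPm; case: Hadm => _ [_ [_ [Hmin _]]].
have [m0 [vm0 [nPm0 m0_min]]] := Hmin (fun p => ~ P p) (ex_intro _ m (conj vm nPm)).
apply: nPm0; apply: H => // q vq qm0; apply: NNPP => nPq.
by move: (m0_min q vq nPq); rewrite qm0.
Qed.

Lemma ord_max_exists (P : qpath Q -> Prop) (s : seq (qpath Q)) :
  (forall x, P x -> x \in s) -> (forall x, P x -> valid x) -> (exists x, P x) ->
  exists2 m, P m & forall q, P q -> q = m \/ ord q m.
Proof.
elim: s P => [|a s IH] P Ps Pv [x Px]; first by have := Ps x Px.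
have [[y [Py ya]]|only_a] := classic (exists y, P y /\ y <> a); last first.
  have Pa y : P y -> y = a by move=> Py; apply: NNPP => ya; apply: only_a; exists y.
  by exists a => [|q /Pa ->]; [rewrite -(Pa x Px) | left].
have [m [Pm ma] m_max] : exists2 m, P m /\ m <> a &
    forall q, P q /\ q <> a -> q = m \/ ord q m.
  apply: IH; last by exists y.
    by move=> z [Pz za]; move: (Ps z Pz); rewrite inE => /predU1P [].
  by move=> z [Pz _]; apply: Pv.
have [Pa|nPa] := classic (P a); last first.
  by exists m => // q Pq; apply: m_max; split=> // qa; apply: nPa; rewrite -qa.
case: (ord_total (Pv _ Pm) (Pv _ Pa) ma) => [ma'|am]; last first.
  by exists m => // q Pq; have [->|qa] := classic (q = a); [right | apply: m_max].
exists a => // q Pq; have [->|qa] := classic (q = a); [by left | right].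
case: (m_max q (conj Pq qa)) => [->//|qm].
exact: ord_trans (Pv _ Pq) (Pv _ Pm) (Pv _ Pa) qm ma'.
Qed.

Lemma tip_exists f : is_kq f -> (exists p, f p != 0) -> exists t, is_tip ord f t.
Proof.
move=> [[s hs] hv] ex.
by have [m fm m_max] := ord_max_exists hs hv ex; exists m.
Qed.

Lemma tip_unique f t t' : is_kq f -> is_tip ord f t -> is_tip ord f t' -> t = t'.
Proof.
move=> [_ hv] [ft ht] [ft' ht']; apply: NNPP => ne.
have vt := hv _ ft; have vt' := hv _ ft'.
case: (ht _ ft') => [/esym//|o1]; case: (ht' _ ft) => [//|o2].
by move: (ord_irr vt); rewrite (ord_trans vt vt' vt o2 o1).
Qed.

Definition reducible_at f p := f p != 0 /\ inTipI ord I p.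

Definition reduction_closed (S : qpath Q -> Prop) :=
  forall p q, S p -> reduces ord I G p q -> S q.

Definition normal_form_in (S : qpath Q -> Prop) f g :=
  [/\ inA ord I g, I (ksub f g) & forall p, g p != 0 -> S p].

Lemma normal_form_self S f : is_kq f -> (forall p, f p != 0 -> S p) ->
  (forall q, ~ reducible_at f q) -> normal_form_in S f f.
Proof.
move=> hf fS irr; split=> //.
  by split=> // p fp; split; [case: hf => _; apply | move=> tp; apply: (irr p)].
exact: I_ksubxx.
Qed.

Lemma reducible_max f : is_kq f -> (forall q, ~ reducible_at f q) \/
  exists2 m, reducible_at f m & forall q, reducible_at f q -> q = m \/ ord q m.
Proof.
move=> [[s hs] hv]; have [[p rp]|] := classic (exists p, reducible_at f p).
  by right; apply: (ord_max_exists (s := s)) => [x [/hs]|x [/hv]|]; last exists p.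
by move=> irr; left=> q rq; apply: irr; exists q.
Qed.

(* The witness is a g b, where g in G has tip t and m = a t b. *)
Lemma tip_reducer m : inTipI ord I m -> valid m ->
  exists2 h, I h /\ h m = 1 &
    forall q, h q != 0 -> q = m \/ reduces ord I G m q /\ ord q m.
Proof.
move=> tm vm; case: HGS => HG [HW _].
have [t [[g [Gg tg]] [a [b [va [vb [ha [hb em]]]]]]]] := HW _ tm.
have [Ig [t' [tg' [gt' _]]]] := HG _ Gg.
have gt : g t = 1 by rewrite (tip_unique (I_is_kq Ig) tg tg').
have vat : valid (pcat a t) by move: vm; rewrite em => /valid_pcatl.
have vt : valid t by case: (I_is_kq Ig) => _; apply; case: tg.
exists (kmul (kmul (pel k a) g) (pel k b)).
  split; first exact: I_sandwich.
  rewrite em kmul_pelr -?em ?pend_pcat //.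
  by rewrite kmul_pell.
move=> q /kmul_neq0 [vq [i [_ /kmul_neq0 [_ [j [_ /pel_neq0 ha' hg]]] /pel_neq0 hb']]].
move: hg; rewrite ha'; set r := (pend a, drop j (take i q.2)) => hg.
have vr : valid r by case: (I_is_kq Ig) => _; apply.
have eq : q = pcat (pcat a r) b.
  by rewrite -ha' -hb' /pcat /r /= !cat_take_drop -surjective_pairing.
have rb : pend r = b.1.
  rewrite -hb' -[take i q.2](cat_take_drop j) pend_cat.
  by have -> : pend (q.1, take j (take i q.2)) = pend a by rewrite -ha'.
have [rt|rt] := classic (r = t); first by left; rewrite eq em rt.
have ort : ord r t by case: tg => _ /(_ r hg) [].
right; split; last by rewrite eq em; apply: ord_pcat.
exists a, b, g, t, r; do 4 (split; first by []); split; first by exists g.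
by do 8 (split; first by []).
Qed.

Lemma reduce_top S m f : reduction_closed S -> valid m -> is_kq f ->
  (forall p, f p != 0 -> S p) -> (forall q, reducible_at f q -> q = m \/ ord q m) ->
  exists f', [/\ is_kq f', forall p, f' p != 0 -> S p, I (ksub f f') &
                 forall q, reducible_at f' q -> ord q m].
Proof.
move=> Scl vm hf fS m_max.
have [[fm tm]|irr_m] := classic (reducible_at f m); last first.
  exists f; split=> //; first exact: I_ksubxx.
  by move=> q rq; case: (m_max q rq) => // qm; case: irr_m; rewrite -qm.
have [h [Ih hm] h_supp] := tip_reducer tm vm.
set f' := ksub f (kscale (f m) h).
have f'_neq0 q : f' q != 0 -> f q != 0 \/ h q != 0.
  rewrite /f' /ksub /kscale; have [->|] := eqVneq (f q) 0; last by left.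
  by have [->|] := eqVneq (h q) 0; [rewrite mulr0 subrr eqxx | right].
have f'm : f' m = 0 by rewrite /f' /ksub /kscale hm mulr1 subrr.
exists f'; split.
- by apply: is_kq_sub => //; apply: is_kq_scale; apply: I_is_kq.
- move=> p /f'_neq0 [/fS //|/h_supp [->|[r _]]]; first exact: fS.
  exact: Scl (fS _ fm) r.
- by apply: (I_ext _ (I_scale (f m) Ih)) => p; rewrite /f' /ksub /kscale opprB addrC subrK.
move=> q [f'q tq]; have qm : q <> m by move=> e; move: f'q; rewrite e f'm eqxx.
case: (f'_neq0 _ f'q) => [fq|/h_supp [//|[]//]].
by case: (m_max q (conj fq tq)).
Qed.

Lemma normal_form_exists S : reduction_closed S ->
  forall f, is_kq f -> (forall p, f p != 0 -> S p) -> exists g, normal_form_in S f g.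
Proof.
move=> Scl; suff bounded m : valid m -> forall f, is_kq f ->
    (forall p, f p != 0 -> S p) -> (forall q, reducible_at f q -> q = m \/ ord q m) ->
    exists g, normal_form_in S f g.
  move=> f hf fS; case: (reducible_max hf) => [irr|[m [fm _] m_max]].
    by exists f; apply: normal_form_self.
  by apply: (bounded m) => //; case: hf => _; apply.
move: m; apply: ord_wf_ind => m vm IH f hf fS m_max.
have [f' [hf' f'S If' below_m]] := reduce_top Scl vm hf fS m_max.
suff [g [Ag If'g gS]] : exists g, normal_form_in S f' g.
  by exists g; split=> //; apply: I_ksubD If' If'g.
case: (reducible_max hf') => [irr|[m' f'm' m'_max]].
  by exists f'; apply: normal_form_self.
have vm' : valid m' by case: hf' => _; apply; case: f'm'.
exact: (IH m' vm' (below_m m' f'm') f').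
Qed.

Lemma normal_form_unique f g1 g2 : inA ord I g1 -> inA ord I g2 ->
  I (ksub f g1) -> I (ksub f g2) -> g1 = g2.
Proof.
move=> [_ n1] [_ n2] I1 I2; apply: functional_extensionality => p.
set d := ksub (ksub f g2) (ksub f g1).
have Id : I d by apply: I_sub.
have dE q : d q = g1 q - g2 q by rewrite /d /ksub; ring.
apply: NNPP => g12; have [t dt] : exists t, is_tip ord d t.
  by apply: tip_exists; [exact: I_is_kq | exists p; rewrite dE subr_eq0; apply/eqP].
have tI : inTipI ord I t by exists d.
case: dt; rewrite dE => + _; have [->|/n1 [] //] := eqVneq (g1 t) 0.
by rewrite sub0r oppr_eq0 => /n2 [].
Qed.

Lemma NF_normal_form S : reduction_closed S ->
  forall f, is_kq f -> (forall p, f p != 0 -> S p) -> normal_form_in S f (NF ord I f).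
Proof.
move=> Scl f hf fS; have [g [Ag Ig gS]] := normal_form_exists Scl hf fS.
have [ANF INF] : inA ord I (NF ord I f) /\ I (ksub f (NF ord I f)).
  exact: (epsilon_spec (inhabits (@kzero Q k)) (fun g => inA ord I g /\ I (ksub f g))
            (ex_intro _ g (conj Ag Ig))).
by rewrite (normal_form_unique ANF Ag INF Ig).
Qed.

Lemma NF_spec f : is_kq f -> inA ord I (NF ord I f) /\ I (ksub f (NF ord I f)).
Proof.
by move=> hf; have [] := @NF_normal_form (fun _ => True) (fun _ _ _ _ => Logic.I) f hf.
Qed.

Lemma NF_vtx f e : is_kq f -> NF ord I f (vtx e) = f (vtx e).
Proof.
move=> /NF_spec [_ If]; apply/eqP; rewrite eq_sym -subr_eq0; apply: contraT.
by move=> /(I_plen If).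
Qed.

Lemma is_kq_amul f g : is_kq f -> is_kq g -> is_kq (amul ord I f g).
Proof. by move=> hf hg; have [[]] := NF_spec (is_kq_kmul hf hg). Qed.

Lemma amul_vtx f g e : is_kq f -> is_kq g ->
  amul ord I f g (vtx e) = f (vtx e) * g (vtx e).
Proof. by move=> hf hg; rewrite /amul NF_vtx ?kmul_vtx //; apply: is_kq_kmul. Qed.

Definition converges_or_eq p q := p = q \/ converges ord I G p q.

Lemma converges_or_eq_trans p q r :
  converges_or_eq p q -> converges_or_eq q r -> converges_or_eq p r.
Proof. by case=> [->//|pq] [<-|qr]; right=> //; apply: t_trans pq qr. Qed.

Lemma NF_pel_support p u : valid p -> NF ord I (pel k p) u != 0 -> converges_or_eq p u.
Proof.
move=> vp.
have Scl : reduction_closed (converges_or_eq p).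
  by move=> x y px xy; apply: converges_or_eq_trans px _; right; apply: t_step.
have [_ _ NF_conv] := NF_normal_form Scl (is_kq_pel k vp)
  (fun q hq => or_introl (esym (pel_neq0 hq))).
exact: NF_conv.
Qed.

End NormalForms.

Lemma split_nth2 (T : Type) (d : T) s j : (j.+1 < size s)%N ->
  s = take j s ++ nth d s j :: nth d s j.+1 :: drop j.+2 s.
Proof.
move=> js; rewrite -{1}(cat_take_drop j s) (drop_nth d) ?(drop_nth d _ (n := j.+1)) //.
exact: ltnW.
Qed.

Section Zigzags.
Variable Q : quiver.
Variable k : fieldType.
Variable ord : rel (qpath Q).
Variables I G : kq Q k -> Prop.
Hypothesis Hadm : admissible ord.
Hypothesis HI : is_ideal I.
Hypothesis HGS : reduced_GS ord I G.
Local Open Scope ring_scope.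
Implicit Types (f g : kq Q k) (p q : qpath Q) (x y : qbv Q).

Lemma reduces_ends p q : reduces ord I G p q -> q.1 = p.1 /\ pend q = pend p.
Proof.
move=>
  [u [v [f [t [p' [vu [vv [If [tf [_ [hu [ht [-> [_ [_ [vp' [hu' [hp' ->]]]]]]]]]]]]]]]]]].
have vt : valid t by case: (I_is_kq HI If) => _; apply; case: tf.
by split=> //; rewrite !pend_pcat // pend_pcat.
Qed.

Lemma converges_ends p q : converges ord I G p q -> q.1 = p.1 /\ pend q = pend p.
Proof.
elim=> [x y /reduces_ends //|x y z _ [h1 h2] _ [h3 h4]].
by rewrite h3 h4.
Qed.

Lemma reduces_pcat p q L R : reduces ord I G p q -> valid L -> valid R ->
  pend L = p.1 -> pend p = R.1 ->
  reduces ord I G (pcat (pcat L p) R) (pcat (pcat L q) R).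
Proof.
move=> [u [v [f [t [p' [vu [vv [If [tf [Wt [hu [ht [ep [nt [fp [vp' [hu' [hp' eq]]]]]]]]]]]]]]]]]]
  vL vR hL hR.
have vt : valid t by case: (I_is_kq HI If) => _; apply; case: tf.
have pv : pend p = pend v by rewrite ep !pend_pcat // pend_pcat.
exists (pcat L u), (pcat v R), f, t, p'.
have hLu : pend L = u.1 by rewrite hL ep.
split; first exact: valid_pcat.
split; first by apply: valid_pcat => //; rewrite -pv.
do 5 (split; first by rewrite ?pend_pcat).
split; first by rewrite ep /pcat /= !catA.
do 5 (split; first by rewrite ?pend_pcat).
by rewrite eq /pcat /= !catA.
Qed.

Lemma converges_or_eq_pcat p q L R : converges_or_eq ord I G p q ->
  valid L -> valid R -> pend L = p.1 -> pend p = R.1 ->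
  converges_or_eq ord I G (pcat (pcat L p) R) (pcat (pcat L q) R).
Proof.
case=> [-> _ _ _ _|pq]; first by left.
move=> vL vR hL hR; right.
elim: pq L R vL vR hL hR => [x y xy|x y z xy IHxy _ IHyz] L R vL vR hL hR.
  by apply: t_step; apply: reduces_pcat.
have [e1 e2] := converges_ends xy.
by apply: t_trans (IHxy _ _ vL vR hL hR) (IHyz _ _ vL vR _ _); rewrite ?e1 ?e2.
Qed.

Lemma qb_vertex_nthw x j : qb_vertex ord I x -> (j < size x.2)%N ->
  valid (nthw x j) /\ (0 < plen (nthw x j))%N.
Proof. by move=> [hv _] /(mem_nth (vtx x.1)) /hv [[]]. Qed.

Lemma qb_vertex_pend_nthw x j : qb_vertex ord I x -> (j.+1 < size x.2)%N ->
  pend (nthw x j) = (nthw x j.+1).1.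
Proof.
move=> [_ [hc _]] jx; move: hc; rewrite /nthw.
case: x.2 jx => [//|w s] /= jx /(pathP (vtx x.1)) /(_ j).
by rewrite -ltnS => /(_ jx) /eqP.
Qed.

Lemma qb_vertex_valid x : qb_vertex ord I x -> valid (qb_prod x).
Proof.
move=> [hv [hc]]; rewrite qb_prodE; case: x.2 hv hc => [//|w s] /= hv hc -> {x}.
elim: s w hv hc => [|w' s IH] w hv /=.
  by rewrite cats0; case: (hv w (mem_head _ _)) => [[]].
move=> /andP [/eqP ww' hc]; rewrite valid_cat; have [[vw _] _] := hv w (mem_head _ _).
rewrite -surjective_pairing vw ww' /= IH // => z hz; apply: hv.
by rewrite inE hz orbT.
Qed.

Lemma qb_prod_split2 x j u : (j.+1 < size x.2)%N ->
  let L := (x.1, flatten (map snd (take j x.2))) in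
  let R := (pend (pcat (nthw x j) (nthw x j.+1)), flatten (map snd (drop j.+2 x.2))) in
  qb_prod x = pcat (pcat L (pcat (nthw x j) (nthw x j.+1))) R /\
  qb_prod (x.1, take j x.2 ++ u :: drop j.+2 x.2) = pcat (pcat L u) R.
Proof.
move=> jx L R; rewrite !qb_prodE {1}(split_nth2 (vtx x.1) jx) !map_cat !flatten_cat.
by rewrite /pcat /= !catA.
Qed.

Lemma qb_arrow_mid x j u y : qb_arrow ord I x (j.+1, u) y -> j.+1 != size x.2 ->
  converges_or_eq ord I G (qb_prod x) (qb_prod y).
Proof.
move=> [hx [_ H]] /negbTE jn; move: H; rewrite /= jn => -[jx [u_nf ->]].
have [[va pa] [vb _]] := (qb_vertex_nthw hx (ltnW jx), qb_vertex_nthw hx jx).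
have ab := qb_vertex_pend_nthw hx jx.
have [ex ey] := qb_prod_split2 u jx.
have vx := qb_vertex_valid hx; rewrite ex in vx; rewrite ex ey.
have vab : valid (pcat (nthw x j) (nthw x j.+1)) by apply: valid_pcat.
have hL : pend (x.1, flatten (map snd (take j x.2))) = (nthw x j).1.
  apply: (valid_cat_pend (valid_pcatl vx) vab).
  by move: pa; rewrite /plen /=; case: (nthw x j).2.
have vR := valid_pcatr vx; rewrite pend_pcat // in vR.
apply: converges_or_eq_pcat => //; last exact: valid_pcatl (valid_pcatl vx).
by apply: NF_pel_support => //; rewrite -kmul_pel.
Qed.

Lemma matched_qb_prod x l y : matched ord I G y l x -> qb_prod x = qb_prod y.
Proof.
case: l => [[|j] u] [[_ [_ H]] [//= _ [jy [eu _]]]].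
move: H; rewrite /= (ltn_eqF jy) => -[_ [_ ->]]; rewrite /= in eu; rewrite eu.
by have [-> ->] := qb_prod_split2 (pcat (nthw y j) (nthw y j.+1)) jy.
Qed.

Definition vtx_zero f := forall e, f (vtx e) = 0.

Lemma pel_vtx_zero p : (0 < plen p)%N -> vtx_zero (pel k p).
Proof.
by move=> p_gt0 e; rewrite /pel; case: (vtx e =P p) => // ep; move: p_gt0; rewrite -ep.
Qed.

Lemma amul_vtx_zerol f g : is_kq f -> is_kq g -> vtx_zero f -> vtx_zero (amul ord I f g).
Proof. by move=> hf hg f0 e; rewrite (amul_vtx Hadm HI HGS) // f0 mul0r. Qed.

Lemma amul_vtx_zeror f g : is_kq f -> is_kq g -> vtx_zero g -> vtx_zero (amul ord I f g).
Proof. by move=> hf hg g0 e; rewrite (amul_vtx Hadm HI HGS) // g0 mulr0. Qed.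

Lemma qb_weight_spec x l y : qb_arrow ord I x l y ->
  let w := qb_weight ord I x l in
  [/\ is_kq w.1, is_kq w.2 &
      vtx_zero w.1 \/ vtx_zero w.2 \/ converges_or_eq ord I G (qb_prod x) (qb_prod y)].
Proof.
case: l => [[|j] u] xy; have [hx [x_gt0 _]] := xy; rewrite /qb_weight /=.
  have [v p] := qb_vertex_nthw hx x_gt0.
  by split; [exact: is_kq_pel | exact: is_kq_oneA | left; exact: pel_vtx_zero].
have is_kq_scale1 c : is_kq (kscale c (oneA k : kq Q k)) by apply/is_kq_scale/is_kq_oneA.
have [jn|jn] := eqVneq j.+1 (size x.2).
  have [v p] : valid (nthw x (size x.2).-1) /\ (0 < plen (nthw x (size x.2).-1))%N.
    by apply: qb_vertex_nthw hx _; rewrite -jn.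
  by split; [exact: is_kq_scale1 | exact: is_kq_pel | right; left; exact: pel_vtx_zero].
split; [exact: is_kq_scale1 | exact: is_kq_oneA | right; right].
exact: qb_arrow_mid xy jn.
Qed.

Lemma zigzag_step_spec x l y (th : bool) :
  (if th then thick ord I G x l y else matched ord I G y l x) ->
  let w := if th then qb_weight ord I x l else dot_weight ord I y l in
  [/\ is_kq w.1, is_kq w.2 &
      vtx_zero w.1 \/ vtx_zero w.2 \/ converges_or_eq ord I G (qb_prod x) (qb_prod y)].
Proof.
case: th => [[xy _]|yx]; first exact: qb_weight_spec.
split; [exact/is_kq_scale/is_kq_oneA | exact: is_kq_oneA | right; right; left].
by rewrite (matched_qb_prod yx).
Qed.

Lemma zz_wt_spec z x th acc : is_kq acc.1 -> is_kq acc.2 -> zz_ok ord I G x z th ->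
  let r := zz_wt ord I x z th acc in
  [/\ is_kq r.1, is_kq r.2, vtx_zero acc.1 -> vtx_zero r.1,
      vtx_zero acc.2 -> vtx_zero r.2 &
      vtx_zero r.1 \/ vtx_zero r.2 \/
      converges_or_eq ord I G (qb_prod x) (qb_prod (last x (unzip2 z)))].
Proof.
elim: z x th acc => [|[l y] z IH] x th acc acc1 acc2 /=.
  by move=> _; split=> //; right; right; left.
move=> [step rest]; have [w1 w2 w_spec] := zigzag_step_spec step.
set w := (if th then _ else _) in w1 w2 w_spec *.
have c1 : is_kq (wcomp ord I acc w).1 by apply: (is_kq_amul Hadm HI HGS).
have c2 : is_kq (wcomp ord I acc w).2 by apply: (is_kq_amul Hadm HI HGS).
have [r1 r2 z1 z2 r_spec] := IH y (~~ th) _ c1 c2 rest.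
split=> // [a0|a0|]; [apply: z1; exact: amul_vtx_zerol | apply: z2; exact: amul_vtx_zeror|].
case: w_spec => [w0|[w0|xy]].
- by left; apply: z1; apply: amul_vtx_zeror.
- by right; left; apply: z2; apply: amul_vtx_zerol.
case: r_spec => [|[|yz]]; [by left | by right; left | right; right].
exact: converges_or_eq_trans xy yz.
Qed.

End Zigzags.

Section Chains.
Variable Q : quiver.
Variable k : fieldType.
Variable ord : rel (qpath Q).
Variables I G : kq Q k -> Prop.
Hypothesis HI : is_ideal I.
Hypothesis HGS : reduced_GS ord I G.
Implicit Types (p u v w : qpath Q).

Lemma inTipIdeal_plen w : inTipIdeal ord I w -> (2 <= plen w)%N.
Proof.
move=> [_ [t [[f [If [ft _]]] /factor_plen tw]]].
exact: leq_trans (I_plen HI If ft) tw.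
Qed.

(* A proper right factor of an element of W contains no tip, because no element
   of W is a factor of another. *)
Lemma uf_vertex_notin_tip_ideal v : uf_vertex ord G v -> ~ inTipIdeal ord I v.
Proof.
move=> [vv [v_le1|[w [Ww [_ [q [vq [q_gt0 [qv wE]]]]]]]]] vT.
  by have := inTipIdeal_plen vT; lia.
case: vT => _ [t [tI tv]]; case: HGS => _ [HW Wmin].
have [t' [Wt' t't]] := HW _ tI.
have vw : factor v w.
  exists q, (vtx (pend v)); do 4 (split=> //).
  by rewrite wE /pcat /= cats0.
have t'w := factor_trans (factor_trans t't tv) vw.
have := factor_plen t't; have := factor_plen tv.
by rewrite (Wmin _ _ Wt' Ww t'w) wE plen_pcat; lia.
Qed.

Definition uf_tip_arrow u v := [/\ pend u = v.1, inTipIdeal ord I (pcat u v) &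
  forall p, proper_left_factor p (pcat u v) -> ~ inTipIdeal ord I p].

Lemma uf_arrow_tip u v : (0 < plen u)%N -> uf_arrow ord I G u v -> uf_tip_arrow u v.
Proof.
move=> u_gt0 [_ [_ [[u0 _]|[uv [uvT u_min]]]]]; last by split.
by move: u_gt0; rewrite u0.
Qed.

Lemma uf_arrow_vtx_plen e v : (0 < plen v)%N -> uf_arrow ord I G (vtx e) v -> plen v = 1%N.
Proof.
move=> v_gt0 [_ [uv [[_ [v1 _]]|[ev [vT _]]]]] //; case: (uf_vertex_notin_tip_ideal uv).
by move: vT; rewrite /pcat /= -[e]/(pend (vtx e)) ev -surjective_pairing.
Qed.

Lemma uf_tip_arrow_prefix u v v' D : uf_tip_arrow u v -> uf_tip_arrow u v' ->
  v'.2 = v.2 ++ D -> D = [::].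
Proof.
move=> [uv vT _] [uv' v'T v'min] v'E; apply: NNPP => D_nil.
apply: (v'min (pcat u v)) => //; split; first by case: vT.
exists (pend (pcat u v), D); split.
  by case: v'T; rewrite /pcat /= v'E catA valid_cat => /andP [].
by split; [rewrite /plen lt0n size_eq0; apply/eqP | rewrite /pcat /= v'E catA].
Qed.

Lemma uf_tip_arrow_unique u v v' X X' : uf_tip_arrow u v -> uf_tip_arrow u v' ->
  v.2 ++ X = v'.2 ++ X' -> v = v' /\ X = X'.
Proof.
wlog le_vv' : v v' X X' / (size v.2 <= size v'.2)%N.
  move=> W a a' e; case: (leqP (size v.2) (size v'.2)) => [le|/ltnW le].
    exact: W.
  by have [-> ->] := W v' v X' X le a' a (esym e).
move=> a a' e.
have v'E : v'.2 = v.2 ++ drop (size v.2) v'.2.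
  have := congr1 (take (size v.2)) e; rewrite take_size_cat // takel_cat // => {1}->.
  by rewrite cat_take_drop.
have v2E : v'.2 = v.2 by rewrite v'E (uf_tip_arrow_prefix a a' v'E) cats0.
move/eqP: e; rewrite eqseq_cat ?v2E // => /andP [_ /eqP ->]; split=> //.
case: a a' => [uv _ _] [uv' _ _].
by rewrite [v]surjective_pairing [v']surjective_pairing -uv -uv' v2E.
Qed.

Lemma uf_walk_unique s s' u : uf_walk ord I G u s -> uf_walk ord I G u s' ->
  (0 < plen u)%N -> (forall v, v \in s -> 0 < plen v)%N ->
  (forall v, v \in s' -> 0 < plen v)%N ->
  flatten (map snd s) = flatten (map snd s') -> s = s'.
Proof.
elim: s s' u => [|v s IH] [|v' s'] u //= w w' u_gt0 s_gt0 s'_gt0.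
- by have := s'_gt0 v' (mem_head _ _); rewrite /plen; case: v'.2.
- by have := s_gt0 v (mem_head _ _); rewrite /plen; case: v.2.
case: w w' => [uv w] [uv' w'] /(uf_tip_arrow_unique (uf_arrow_tip u_gt0 uv)
  (uf_arrow_tip u_gt0 uv')) [vv' e]; subst v'; congr cons.
apply: (IH s' v w w' (s_gt0 _ (mem_head _ _))) e.
- by move=> z zs; apply: s_gt0; rewrite inE zs orbT.
- by move=> z zs; apply: s'_gt0; rewrite inE zs orbT.
Qed.

Lemma chain_unique s s' : is_chainseq ord I G s -> is_chainseq ord I G s' ->
  flatten (map snd s) = flatten (map snd s') -> s = s'.
Proof.
case: s s' => [|v s] [|v' s'] [// _ [s_pos [e [ev w]]]] [// _ [s'_pos [e' [e'v' w']]]].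
have [[vv v_gt0] [vv' v'_gt0]] := (s_pos v (mem_head _ _), s'_pos v' (mem_head _ _)).
move/eqP; rewrite /= eqseq_cat; last first.
  by rewrite -!/(plen _) (uf_arrow_vtx_plen v_gt0 ev) (uf_arrow_vtx_plen v'_gt0 e'v').
move=> /andP [/eqP /(valid_plen_eq vv vv' v_gt0) vE /eqP flat_s]; subst v'.
congr cons; apply: (uf_walk_unique w w' v_gt0 _ _ flat_s).
- by move=> z zs; case: (s_pos z) => //; rewrite inE zs orbT.
- by move=> z zs; case: (s'_pos z) => //; rewrite inE zs orbT.
Qed.

Lemma chain_size_qb_prod c c' : chain_v ord I G c -> chain_v ord I G c' ->
  qb_prod c = qb_prod c' -> size c.2 = size c'.2.
Proof.
have flatten_neq0 v s : is_chainseq ord I G (v :: s) -> flatten (map snd (v :: s)) != [::].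
  by move=> [_ [pos _]]; have := (pos v (mem_head _ _)).2; rewrite /plen /=; case: v.2.
rewrite !qb_prodE /chain_v; case: c c' => e [|v s] [e' [|v' s']] //= + + [_].
- by move=> _ [/flatten_neq0 /eqP + _] flat; rewrite /= -flat.
- by move=> [/flatten_neq0 /eqP + _] _ flat; rewrite /= flat.
by move=> [cs _] [cs' _] /(chain_unique cs cs') [_ ->].
Qed.

End Chains.

Theorem theorem5p4 (Q : quiver) (k : fieldType) (ord : rel (qpath Q))
  (I G : kq Q k -> Prop) :
  admissible ord -> is_ideal I -> reduced_GS ord I G ->
  (forall (n : nat) (c c' : qbv Q), (1 <= n)%N ->
     chain_v ord I G c -> size c.2 = n ->
     chain_v ord I G c' -> size c'.2 = n.-1 ->
     ~ converges ord I G (qb_prod c) (qb_prod c')) ->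
  anick_minimal ord I G.
Proof.
move=> Hadm HI HGS no_conv n c c' n_gt0 cc sc cc' sc' zs _ zsE.
rewrite big1_seq // => z /andP [_ /(zsE z) [z_ok [_ z_end]]].
have [_ _ _ _] := zz_wt_spec Hadm HI HGS (acc := (oneA k, oneA k))
  (is_kq_oneA Q k) (is_kq_oneA Q k) z_ok.
rewrite z_end => -[w1|[w2|[prod_eq|conv]]].
- by rewrite w1 mul0r.
- by rewrite w2 mulr0.
- by move: (chain_size_qb_prod HI HGS cc cc' prod_eq); rewrite sc sc'; lia.
- by case: (no_conv n c c').
Qed.
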